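(* Let $f:\mathbb{R}^{n\times n}\to\mathbb{R}$ be differentiable and suppose there are constants $\underline{\nu}_f\le\overline{\nu}_f$ with $\frac{\underline{\nu}_f}{2}\|Y-X\|_{\mathsf F}^2\le f(Y)-f(X)-\langle\nabla f(X),Y-X\rangle\le\frac{\overline{\nu}_f}{2}\|Y-X\|_{\mathsf F}^2$ for all $X,Y\in\mathcal{D}_n$. Let $c_2>0$ satisfy $|f(X)-f(Y)|\ge c_2$ for all $X,Y\in\Pi_n$ with $f(X)\ne f(Y)$. Let $0<p<1$, $\epsilon\ge0$, $\overline{\nu}_h=p(1-p)(1+\epsilon)^{p-2}$, $K\ge1$, $\hat X_1,\dots,\hat X_K\in\mathcal{D}_n$, $\bar X=\frac1K\sum_{i=1}^K\hat X_i$. Suppose $0<\mu<\frac{c_2}{2n}$ and $\sigma>\max\{(\overline{\nu}_f-2\mu)/\overline{\nu}_h,0\}$. Then any global minimizer $\tilde X$ of \[ \min_{X\in\mathcal{D}_n}\ f(X)+\sigma\sum_{i,j=1}^n(X_{ij}+\epsilon)^p-\mu\|X-\bar X\|_{\mathsf F}^2 \] is a global minimizer of $\min_{X\in\Pi_n}f(X)$, and $\|\tilde X-\bar X\|_{\mathsf F}\ge\|X^*-\bar X\|_{\mathsf F}$ for every global minimizer $X^*$ of $\min_{X\in\Pi_n}f(X)$.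
   Context: $\Pi_n$ is the set of $n\times n$ permutation matrices and $\mathcal{D}_n=\{X\in\mathbb{R}^{n\times n}: X\mathbf{e}=X^{\mathsf T}\mathbf{e}=\mathbf{e},\ X\ge0\}$ the set of doubly stochastic matrices ($\mathbf e$ the all-ones vector); $\langle M,N\rangle=\mathrm{tr}(M^{\mathsf T}N)$, $\|\cdot\|_{\mathsf F}$ the Frobenius norm. *)

From HB Require Import structures.
From mathcomp Require Import all_boot all_order all_algebra.
From mathcomp Require Import all_classical all_reals all_analysis.
Set Implicit Arguments. Unset Strict Implicit. Unset Printing Implicit Defensive.
Import Order.TTheory GRing.Theory Num.Theory.
Import numFieldNormedType.Exports.
Local Open Scope ring_scope.

Definition frob_inner (R : realType) (n : nat) (M N : 'M[R]_n) : R :=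
  \sum_(i < n) \sum_(j < n) M i j * N i j.

Definition frob_norm (R : realType) (n : nat) (M : 'M[R]_n) : R :=
  Num.sqrt (frob_inner M M).

Definition doubly_stochastic (R : realType) (n : nat) (X : 'M[R]_n) : Prop :=
  (forall i j, 0 <= X i j) /\
  (forall i, \sum_(j < n) X i j = 1) /\
  (forall j, \sum_(i < n) X i j = 1).

Definition grad (R : realType) (n : nat) (f : 'M[R]_n -> R) (X : 'M[R]_n)
  : 'M[R]_n := \matrix_(i, j) ('D_(delta_mx i j) f X).

From HB Require Import structures.
From mathcomp Require Import all_boot all_order all_algebra.
From mathcomp Require Import all_classical all_reals all_analysis.
From mathcomp Require Import perm ring lra.
Set Implicit Arguments. Unset Strict Implicit. Unset Printing Implicit Defensive.
Import Order.TTheory GRing.Theory Num.Theory.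
Import numFieldNormedType.Exports.
Local Open Scope classical_set_scope.
Local Open Scope ring_scope.

(* A minimizer Xt of the objective over the doubly stochastic matrices is a
   vertex of that polytope.  Otherwise the fractional entries of Xt support a
   nonzero matrix E with zero row and column sums (on that support the row and
   column constraints number at most its size and are linearly dependent), and
   Xt + E, Xt - E stay doubly stochastic once E is scaled down.  Along this
   segment the objective is strictly concave: f bends up by at most nu_hi, the
   penalty bends down by at least sigma * nu_h because (x + eps) ^ p is strongly
   concave on [0, 1], and -mu ||X - Xbar||^2 contributes -2 mu.  So Xt + E or
   Xt - E would be strictly better.  On permutation matrices the penalty is
   constant and ||X - Xbar||^2 varies by at most 2 n, so mu < c2 / (2 n) forces
   f (Xt) to be minimal; among the f-minimal permutations, minimizing the
   objective means maximizing the distance to Xbar. *)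

Section StrongConcavity.
Variable R : realType.

Lemma midpoint_le_of_derive_nonincr (g dg : R -> R) (z s : R) : 0 <= s ->
  (forall x, z - s <= x <= z + s -> is_derive x 1 g (dg x)) ->
  (forall x y, z - s < x -> x <= y -> y < z + s -> dg y <= dg x) ->
  g (z + s) + g (z - s) <= 2 * g z.
Proof.
rewrite le_eqVlt => /predU1P[<- _ _|s0 gD dg_nincr]; first by rewrite addr0 subr0; lra.
have mvt a b : z - s <= a -> a < b -> b <= z + s ->
    exists2 c, a < c < b & g b - g a = dg c * (b - a).
  move=> sa ab bs.
  have gD' x : x \in `]a, b[ -> is_derive x 1 g (dg x).
    by rewrite in_itv /= => /andP[ax xb]; apply: gD; lra.
  have gC : {within `[a, b], continuous g}.
    apply: derivable_within_continuous => x; rewrite in_itv /= => /andP[ax xb].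
    have xI : z - s <= x <= z + s by lra.
    by have [] := gD x xI.
  by have [c] := MVT ab gD' gC; rewrite in_itv; exists c.
have [c1 /andP[c1l c1r] E1] := mvt (z - s) z (lexx _) ltac:(lra) ltac:(lra).
have [c2 /andP[c2l c2r] E2] := mvt z (z + s) ltac:(lra) ltac:(lra) (lexx _).
have := dg_nincr c1 c2 c1l ltac:(lra) c2r.
rewrite (_ : z - (z - s) = s) in E1; last by ring.
rewrite (_ : z + s - z = s) in E2; last by ring.
nra.
Qed.

Lemma powR_MVT (q a b : R) : 0 < a -> a < b ->
  exists2 c, a < c < b & b `^ q - a `^ q = q * c `^ (q - 1) * (b - a).
Proof.
move=> a0 ab.
have powD x : x \in `]a, b[ -> is_derive x 1 (fun y : R => y `^ q) (q * x `^ (q - 1)).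
  by rewrite in_itv /= => /andP[ax _]; apply: is_derive1_powR; lra.
have powC : {within `[a, b], continuous (fun y : R => y `^ q)}.
  apply: derivable_within_continuous => x; rewrite in_itv /= => /andP[ax _].
  have x0 : 0 < x by lra.
  by have [] := is_derive1_powR q x0.
by have [c] := MVT ab powD powC; rewrite in_itv; exists c.
Qed.

Lemma le0_ger_powR (q a b : R) : q <= 0 -> 0 < a -> a <= b -> b `^ q <= a `^ q.
Proof.
move=> q0 a0 ab.
have : a `^ (- q) <= b `^ (- q) by apply: ge0_ler_powR; rewrite ?nnegrE; lra.
by rewrite !powRN lef_pV2 ?posrE ?powR_gt0 //; lra.
Qed.

(* p (1 - p) B ^ (p - 2) is the least value of -(w ^ p)'' on ]0, B]. *)
Lemma powR_midpoint_strong_concave (p B z s : R) : 0 < p < 1 ->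
  0 < z - `|s| -> z + `|s| <= B ->
  (z + s) `^ p + (z - s) `^ p <= 2 * z `^ p - p * (1 - p) * B `^ (p - 2) * s ^+ 2.
Proof.
wlog s0 : s / 0 <= s => [hwlog|].
  have [/hwlog //|/ltW s_le0 p01 zs zsB] := leP 0 s.
  have := hwlog (- s); rewrite normrN sqrrN opprK oppr_ge0 => /(_ s_le0 p01 zs zsB).
  by rewrite addrC.
rewrite ger0_norm // => /andP[p0 p1] zs zsB.
set k := p * (1 - p) * B `^ (p - 2) / 2.
pose psi w := w `^ p + k * w ^+ 2.
pose dpsi w := p * w `^ (p - 1) + k * (2 * w).
suff : psi (z + s) + psi (z - s) <= 2 * psi z.
  have -> : psi (z + s) + psi (z - s) = (z + s) `^ p + (z - s) `^ p + 2 * k * (z ^+ 2 + s ^+ 2).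
    by rewrite /psi; ring.
  by rewrite /psi /k; lra.
apply: (@midpoint_le_of_derive_nonincr psi dpsi) => // [x xI|x y xl xy yr].
  have x0 : 0 < x by lra.
  have hsq : is_derive x (1 : R) (fun w => k * w ^+ 2) (k * (2 * x)).
    by apply: is_derive_eq; rewrite /GRing.scale /=; ring.
  exact: is_derive_eq (is_deriveD (is_derive1_powR p x0) hsq) _.
have [<-|neq_xy] := eqVneq x y; first exact: lexx.
have [c /andP[xc cy] E] := @powR_MVT (p - 1) x y ltac:(lra) ltac:(by rewrite lt_neqAle neq_xy xy).
have Bc : B `^ (p - 2) <= c `^ (p - 2) by apply: le0_ger_powR; lra.
rewrite -subr_le0 (_ : dpsi y - dpsi x = p * (y `^ (p - 1) - x `^ (p - 1)) + k * 2 * (y - x)).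
  2: by rewrite /dpsi; ring.
rewrite E (_ : p - 1 - 1 = p - 2) /k; last by ring.
have : 0 <= p * (1 - p) * (y - x) * (c `^ (p - 2) - B `^ (p - 2)).
  by apply: mulr_ge0; [apply: mulr_ge0; [apply: mulr_ge0|]|]; lra.
lra.
Qed.
End StrongConcavity.

Section Frobenius.
Variables (R : realType) (n : nat).
Implicit Types A B E M N : 'M[R]_n.

Lemma frob_innerE M N : frob_inner M N = \sum_(k : 'I_n * 'I_n) M k.1 k.2 * N k.1 k.2.
Proof. by rewrite /frob_inner pair_bigA. Qed.

Lemma frob_inner_ge0 M : 0 <= frob_inner M M.
Proof. by rewrite frob_innerE sumr_ge0 // => k _; rewrite -expr2 sqr_ge0. Qed.

Lemma frob_norm_sq M : frob_norm M ^+ 2 = frob_inner M M.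
Proof. by rewrite sqr_sqrtr // frob_inner_ge0. Qed.

Lemma frob_norm_ge0 M : 0 <= frob_norm M.
Proof. exact: sqrtr_ge0. Qed.

Lemma frob_innerN M N : frob_inner M (- N) = - frob_inner M N.
Proof. by rewrite !frob_innerE -sumrN; apply: eq_bigr => k _; rewrite mxE mulrN. Qed.

Lemma frob_normN M : frob_norm (- M) = frob_norm M.
Proof.
rewrite /frob_norm !frob_innerE; congr Num.sqrt.
by apply: eq_bigr => k _; rewrite mxE mulrNN.
Qed.

Lemma frob_norm_sq_gt0 M : M != 0 -> 0 < frob_norm M ^+ 2.
Proof.
move=> M_neq0; rewrite frob_norm_sq lt_def frob_inner_ge0 andbT.
apply: contra_neq M_neq0; rewrite frob_innerE => /eqP.
rewrite psumr_eq0 => [/allP M0|k _]; last by rewrite -expr2 sqr_ge0.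
apply/matrixP => i j; rewrite mxE; apply/eqP.
by have /implyP := M0 (i, j) (mem_index_enum _); rewrite -expr2 sqrf_eq0; apply.
Qed.

Lemma frob_norm_parallelogram A E :
  frob_norm (A + E) ^+ 2 + frob_norm (A - E) ^+ 2
    = 2 * frob_norm A ^+ 2 + 2 * frob_norm E ^+ 2.
Proof.
rewrite !frob_norm_sq !frob_innerE !mulr_sumr -!big_split /=.
by apply: eq_bigr => k _; rewrite !mxE; ring.
Qed.

Lemma smooth_midpoint_le (C : 'M[R]_n -> Prop) (f : 'M[R]_n -> R)
    (g : 'M[R]_n -> 'M[R]_n) (nu : R) A E :
  (forall X Y, C X -> C Y ->
     f Y - f X - frob_inner (g X) (Y - X) <= nu / 2 * frob_norm (Y - X) ^+ 2) ->
  C A -> C (A + E) -> C (A - E) ->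
  f (A + E) + f (A - E) <= 2 * f A + nu * frob_norm E ^+ 2.
Proof.
move=> f_smooth CA CAE CAE'.
have := f_smooth _ _ CA CAE; have := f_smooth _ _ CA CAE'.
rewrite (addrC (A + E)) (addrC (A - E)) !addKr frob_innerN frob_normN.
lra.
Qed.

End Frobenius.

Section Penalty.
Variables (R : realType) (n : nat) (p eps : R).
Hypotheses (p01 : 0 < p < 1) (eps_ge0 : 0 <= eps).

Definition penalty (X : 'M[R]_n) : R := \sum_(i < n) \sum_(j < n) (X i j + eps) `^ p.

Lemma penalty_midpoint (X E : 'M[R]_n) :
  (forall i j, E i j != 0 -> `|E i j| < X i j /\ X i j + `|E i j| <= 1) ->
  penalty (X + E) + penalty (X - E)
    <= 2 * penalty X - p * (1 - p) * (1 + eps) `^ (p - 2) * frob_norm E ^+ 2.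
Proof.
move=> E_small.
rewrite frob_norm_sq frob_innerE /penalty !pair_bigA !mulr_sumr -sumrB -big_split /=.
apply: ler_sum => -[i j] _ /=; rewrite !mxE.
have [->|E_neq0] := eqVneq (E i j) 0.
  by rewrite !(mulr0, oppr0, addr0, subr0); lra.
rewrite -expr2 !(addrAC (X i j) _ eps).
have [E_lt E_le1] := E_small i j E_neq0.
apply: powR_midpoint_strong_concave => //.
  by rewrite subr_gt0 (lt_le_trans E_lt) // lerDl.
by rewrite addrAC lerD2r.
Qed.

End Penalty.

Lemma double_card_imset_leq (T U : finType) (h : T -> U) (S : {set T}) :
  (forall x, x \in S -> exists2 y, y \in S & (y != x) && (h y == h x)) ->
  (2 * #|h @: S| <= #|S|)%N.
Proof.
move=> S2; rewrite -[#|S|]sum1_card (partition_big_imset h) /= mulnC -sum_nat_const.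
apply: leq_sum => _ /imsetP[x xS ->]; have [y yS /andP[y_neq_x hyx]] := S2 x xS.
rewrite (bigD1 x) ?xS ?eqxx //= (bigD1 y) /= ?yS ?hyx ?y_neq_x //.
Qed.

Section BalancedDirection.
Variables (F : fieldType) (m n : nat) (S : {set 'I_m * 'I_n}).

Definition fiber_mx (I : finType) (h : 'I_m * 'I_n -> I) : 'M[F]_(#|S|, #|h @: S|) :=
  \matrix_(k, a) (h (enum_val k) == enum_val a)%:R.

Lemma fiber_mx_const1 (I : finType) (h : 'I_m * 'I_n -> I) :
  fiber_mx h *m (const_mx 1 : 'cV_#|h @: S|) = const_mx 1.
Proof.
apply/matrixP => k c; rewrite !mxE.
under eq_bigr do rewrite !mxE mulr1.
rewrite -(big_enum_val (fun y => (h (enum_val k) == y)%:R)) /=.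
rewrite (bigD1 (h (enum_val k))) ?imset_f ?enum_valP //= eqxx big1 ?addr0 //.
by move=> y /andP[_ /negPf]; rewrite eq_sym => ->.
Qed.

Lemma fiber_mx_ker (I : finType) (h : 'I_m * 'I_n -> I) (u : 'rV[F]_#|S|) :
  u *m fiber_mx h = 0 -> forall c, \sum_(k | h (enum_val k) == c) u 0 k = 0.
Proof.
move=> uH c; have [cS|cNS] := boolP (c \in h @: S).
  have := congr1 (fun M : 'rV_#|h @: S| => M 0 (enum_rank_in cS c)) uH.
  rewrite !mxE => uHc; apply: etrans uHc; rewrite big_mkcond; apply: eq_bigr => k _.
  by rewrite !mxE enum_rankK_in //; case: eqP; rewrite ?mulr1 ?mulr0.
rewrite big_pred0 // => k; apply: contraNF cNS => /eqP <-.
by rewrite imset_f ?enum_valP.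
Qed.

Hypotheses (S_gt0 : (0 < #|S|)%N)
  (S_row2 : forall x, x \in S -> exists2 y, y \in S & (y != x) && (y.1 == x.1))
  (S_col2 : forall x, x \in S -> exists2 y, y \in S & (y != x) && (y.2 == x.2)).

Definition incidence_mx := row_mx (fiber_mx fst) (fiber_mx snd).

(* A row or column meeting S meets it at least twice, so there are at most #|S|
   constraints; and the row constraints minus the column constraints sum to 0. *)
Lemma rank_incidence_mx_lt : (\rank incidence_mx < #|S|)%N.
Proof.
have card_le : (#|fst @: S| + #|snd @: S| <= #|S|)%N.
  have := leq_add (double_card_imset_leq S_row2) (double_card_imset_leq S_col2).
  by rewrite -mulnDr addnn -mul2n leq_pmul2l.
apply: leq_trans card_le; rewrite ltn_neqAle rank_leq_col andbT.
pose v := col_mx (const_mx 1 : 'cV[F]_#|fst @: S|) (- const_mx 1 : 'cV_#|snd @: S|).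
have incidence_v : incidence_mx *m v = 0.
  by rewrite mul_row_col mulmxN !fiber_mx_const1 subrr.
have v_neq0 : v != 0.
  have [[i j] xS] := card_gt0P S_gt0.
  rewrite col_mx_eq0 negb_and; apply/orP; left; apply/negP => /eqP/matrixP.
  move=> /(_ (enum_rank_in (imset_f fst xS) i) 0); rewrite !mxE.
  by move/eqP; rewrite oner_eq0.
apply: contra_neq v_neq0 => rank_eq.
have : v^T *m incidence_mx^T == 0 by rewrite -trmx_mul incidence_v trmx0.
rewrite mulmx_free_eq0; last by rewrite /row_free mxrank_tr rank_eq.
by move/eqP/(congr1 trmx); rewrite trmxK trmx0.
Qed.

Lemma balanced_direction : exists D : 'M[F]_(m, n),
  [/\ D != 0, forall i, \sum_j D i j = 0, forall j, \sum_i D i j = 0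
    & forall i j, D i j != 0 -> (i, j) \in S].
Proof.
pose u := nz_row (kermx incidence_mx).
have u_neq0 : u != 0.
  by rewrite nz_row_eq0 kermx_eq0 /row_free neq_ltn rank_incidence_mx_lt.
have [ufst usnd] : u *m fiber_mx fst = 0 /\ u *m fiber_mx snd = 0.
  apply/eq_row_mx; rewrite -mul_mx_row row_mx0; apply/sub_kermxP.
  exact: nz_row_sub.
pose D : 'M[F]_(m, n) := \matrix_(i, j) \sum_(k | enum_val k == (i, j)) u 0 k.
have D_enum k : D (enum_val k).1 (enum_val k).2 = u 0 k.
  rewrite mxE -surjective_pairing (eq_bigl (pred1 k)) ?big_pred1_eq // => l.
  by rewrite (inj_eq enum_val_inj).
have D_rows i : \sum_j D i j = \sum_(k | (enum_val k).1 == i) u 0 k.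
  rewrite (partition_big (fun k => (enum_val k).2) predT) //=.
  apply: eq_bigr => j _; rewrite mxE; apply: eq_bigl => k.
  by rewrite -xpair_eqE -surjective_pairing.
have D_cols j : \sum_i D i j = \sum_(k | (enum_val k).2 == j) u 0 k.
  rewrite (partition_big (fun k => (enum_val k).1) predT) //=.
  apply: eq_bigr => i _; rewrite mxE; apply: eq_bigl => k.
  by rewrite andbC -xpair_eqE -surjective_pairing.
exists D; split.
- apply: contra_neq u_neq0 => D0; apply/rowP => k.
  by rewrite -D_enum D0 !mxE.
- by move=> i; rewrite D_rows (fiber_mx_ker ufst).
- by move=> j; rewrite D_cols (fiber_mx_ker usnd).
- move=> i j; apply: contraR => ijNS; rewrite mxE big_pred0 // => k.
  by apply: contraNF ijNS => /eqP <-; rewrite enum_valP.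
Qed.

End BalancedDirection.

Lemma exists_small_pos (R : realFieldType) (I : finType) (a b : I -> R) :
  (forall x, 0 < a x) -> exists2 t, 0 < t & forall x, t * b x < a x.
Proof.
move=> a_gt0; pose W := \sum_x `|b x| / a x.
have ba_ge0 x : 0 <= `|b x| / a x by rewrite divr_ge0 // ltW.
have W_ge0 : 0 <= W by apply: sumr_ge0.
exists (1 + W)^-1 => [|x]; first by rewrite invr_gt0; lra.
have : `|b x| / a x <= W by rewrite /W (bigD1 x) //= lerDl; apply: sumr_ge0.
rewrite ler_pdivrMr // => bW; rewrite mulrC ltr_pdivrMr; last lra.
have := ler_norm (b x); have := a_gt0 x; nra.
Qed.

Lemma sum_indicator1 (R : pzSemiRingType) (T : finType) (a : T) :
  \sum_(j : T) ((a == j)%:R : R) = 1.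
Proof.
by rewrite (bigD1 a) //= eqxx big1 ?addr0 // => j /negPf; rewrite eq_sym => ->.
Qed.

Lemma sumr_ge0_two (R : numDomainType) (T : finType) (F : T -> R) a b :
  (forall x, 0 <= F x) -> a != b -> F a + F b <= \sum_x F x.
Proof.
move=> F_ge0 ab; rewrite (bigD1 a) //= lerD2l (bigD1 b) 1?eq_sym //= lerDl.
exact: sumr_ge0.
Qed.

Lemma perm_mxE (R : pzSemiRingType) (n : nat) (s : 'S_n) i j :
  (perm_mx s : 'M[R]_n) i j = (s i == j)%:R.
Proof. by rewrite !mxE. Qed.

Section DoublyStochastic.
Variables (R : realType) (n : nat).
Implicit Types (X E P : 'M[R]_n) (s : 'S_n).

Lemma doubly_stochastic_tr X : doubly_stochastic X -> doubly_stochastic X^T.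
Proof.
move=> [X_ge0 [X_rows X_cols]]; split; first by move=> i j; rewrite mxE.
by split=> i; under eq_bigr do rewrite mxE.
Qed.

Lemma doubly_stochastic_le1 X i j : doubly_stochastic X -> X i j <= 1.
Proof.
move=> [X_ge0 [X_rows _]]; rewrite -(X_rows i) (bigD1 j) //= lerDl.
by rewrite sumr_ge0.
Qed.

Lemma doubly_stochastic_addr X E : doubly_stochastic X ->
  (forall i, \sum_j E i j = 0) -> (forall j, \sum_i E i j = 0) ->
  (forall i j, 0 <= X i j + E i j) -> doubly_stochastic (X + E).
Proof.
move=> [_ [X_rows X_cols]] E_rows E_cols XE_ge0; split; first by move=> i j; rewrite mxE.
split=> i; under eq_bigr do rewrite mxE.
  by rewrite big_split /= X_rows E_rows addr0.
by rewrite big_split /= X_cols E_cols addr0.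
Qed.

Lemma doubly_stochastic_addr_subr X E : doubly_stochastic X ->
  (forall i, \sum_j E i j = 0) -> (forall j, \sum_i E i j = 0) ->
  (forall i j, `|E i j| <= X i j) -> doubly_stochastic (X + E) /\ doubly_stochastic (X - E).
Proof.
move=> X_ds E_rows E_cols E_le.
have E_bounds i j : - X i j <= E i j <= X i j by rewrite -ler_norml.
split; apply: doubly_stochastic_addr => //.
- by move=> i j; have := E_bounds i j; lra.
- by move=> i; under eq_bigr do rewrite mxE; rewrite sumrN E_rows oppr0.
- by move=> j; under eq_bigr do rewrite mxE; rewrite sumrN E_cols oppr0.
- by move=> i j; rewrite mxE; have := E_bounds i j; lra.
Qed.

Lemma perm_mx_doubly_stochastic P : is_perm_mx P -> doubly_stochastic P.
Proof.
case/is_perm_mxP => s ->; split; first by move=> i j; rewrite perm_mxE ler0n.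
split=> i; under eq_bigr do rewrite perm_mxE; first exact: sum_indicator1.
under eq_bigr do rewrite (canF_eq (permK s)) eq_sym.
exact: sum_indicator1.
Qed.

Lemma perm_mx01 P i j : is_perm_mx P -> P i j = 0 \/ P i j = 1.
Proof. by case/is_perm_mxP => s ->; rewrite perm_mxE; case: eqP; [right|left]. Qed.

Lemma doubly_stochastic01_perm_mx X : doubly_stochastic X ->
  (forall i j, X i j = 0 \/ X i j = 1) -> is_perm_mx X.
Proof.
move=> [X_ge0 [X_rows X_cols]] X01.
pose s i := odflt i [pick j | X i j == 1].
have X_s i : X i (s i) = 1.
  rewrite /s; case: pickP => [j /eqP //|X_neq1] /=.
  have := X_rows i; rewrite big1 => [/eqP|j _]; first by rewrite eq_sym oner_eq0.
  by case: (X01 i j) => // X1; move: (X_neq1 j); rewrite /= X1 eqxx.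
have X1_s i j : X i j = 1 -> j = s i.
  move=> X1; apply/eqP; apply: contraT => j_neq.
  have := sumr_ge0_two (X_ge0 i) j_neq; rewrite X_rows X1 X_s; lra.
have s_inj : injective s.
  move=> i k s_ik; apply/eqP; apply: contraT => i_neq.
  have := sumr_ge0_two (X_ge0^~ (s i)) i_neq; rewrite X_cols X_s s_ik X_s; lra.
apply/is_perm_mxP; exists (perm s_inj); apply/matrixP => i j.
rewrite perm_mxE permE; have [<-|j_neq] := eqVneq (s i) j; first exact: X_s.
by case: (X01 i j) => // /X1_s j_eq; rewrite j_eq eqxx in j_neq.
Qed.

Lemma doubly_stochastic_mean (K : nat) (Y : 'I_K -> 'M[R]_n) : (0 < K)%N ->
  (forall k, doubly_stochastic (Y k)) -> doubly_stochastic (K%:R^-1 *: \sum_k Y k).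
Proof.
move=> K_gt0 Y_ds; have K_neq0 : K%:R != 0 :> R by rewrite pnatr_eq0 -lt0n.
split=> [i j|]; rewrite ?mxE ?summxE.
  by rewrite mulr_ge0 ?invr_ge0 ?ler0n // sumr_ge0 // => k _; case: (Y_ds k).
split=> i; under eq_bigr do rewrite mxE summxE.
  rewrite -mulr_sumr exchange_big /=.
  by under eq_bigr => k _ do rewrite (proj1 (proj2 (Y_ds k)) i); rewrite sumr_const card_ord mulVf.
rewrite -mulr_sumr exchange_big /=.
by under eq_bigr => k _ do rewrite (proj2 (proj2 (Y_ds k)) i); rewrite sumr_const card_ord mulVf.
Qed.

Definition frac_entries X : {set 'I_n * 'I_n} := [set x | 0 < X x.1 x.2 < 1].

Lemma doubly_stochastic_nonfrac X i j : doubly_stochastic X ->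
  (i, j) \notin frac_entries X -> X i j = 0 \/ X i j = 1.
Proof.
move=> X_ds; have [X_ge0 _] := X_ds; have X_le1 := doubly_stochastic_le1 i j X_ds.
rewrite inE /= negb_and -!leNgt => /orP[Xij|Xij]; [left|right]; apply/eqP.
  by rewrite eq_le Xij X_ge0.
by rewrite eq_le Xij X_le1.
Qed.

Lemma frac_entries_row2 X : doubly_stochastic X ->
  forall x, x \in frac_entries X ->
  exists2 y, y \in frac_entries X & (y != x) && (y.1 == x.1).
Proof.
move=> X_ds [i j]; rewrite inE /= => /andP[Xij_gt0 Xij_lt1].
have [k /andP[k_neq Xik_frac]|no_frac] := pickP [pred k | (k != j) && ((i, k) \in frac_entries X)].
  by exists (i, k); rewrite // xpair_eqE eqxx andbT.
have X01 k : k != j -> X i k = 0 \/ X i k = 1.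
  move=> k_neq; apply: doubly_stochastic_nonfrac => //.
  by move: (no_frac k); rewrite /= k_neq /= => ->.
have [X_ge0 [X_rows _]] := X_ds.
have rest : \sum_(k | k != j) X i k = 1 - X i j.
  by have := X_rows i; rewrite (bigD1 j) //=; lra.
have [k /andP[k_neq /eqP Xik1]|no_one] := pickP [pred k | (k != j) && (X i k == 1)].
  have : X i k <= \sum_(k | k != j) X i k by rewrite (bigD1 k) //= lerDl sumr_ge0.
  by rewrite rest Xik1; lra.
suff : \sum_(k | k != j) X i k = 0 by rewrite rest; lra.
apply: big1 => k k_neq; case: (X01 k k_neq) => // Xik1.
by have := no_one k; rewrite /= k_neq Xik1 eqxx.
Qed.

Lemma frac_entries_col2 X : doubly_stochastic X ->
  forall x, x \in frac_entries X ->
  exists2 y, y \in frac_entries X & (y != x) && (y.2 == x.2).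
Proof.
move=> X_ds [i j] ij_frac.
have ji_frac : (j, i) \in frac_entries X^T by move: ij_frac; rewrite !inE /= mxE.
have [[k l] kl_frac /andP[kl_neq /= /eqP kj]] :=
  frac_entries_row2 (doubly_stochastic_tr X_ds) ji_frac.
exists (l, k); first by move: kl_frac; rewrite !inE /= mxE.
by move: kl_neq; rewrite kj !xpair_eqE !eqxx /= !andbT.
Qed.

Lemma doubly_stochastic_direction X : doubly_stochastic X -> ~~ is_perm_mx X ->
  exists D : 'M[R]_n, [/\ D != 0, forall i, \sum_j D i j = 0, forall j, \sum_i D i j = 0
    & forall i j, D i j != 0 -> 0 < X i j < 1].
Proof.
move=> X_ds X_nperm.
have frac_gt0 : (0 < #|frac_entries X|)%N.
  apply: contraNT X_nperm; rewrite -leqNgt leqn0 => /eqP/card0_eq frac0.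
  apply: doubly_stochastic01_perm_mx => // i j.
  by apply: doubly_stochastic_nonfrac => //; rewrite frac0.
have [D [D_neq0 D_rows D_cols D_frac]] := balanced_direction R frac_gt0
  (frac_entries_row2 X_ds) (frac_entries_col2 X_ds).
by exists D; split => // i j /D_frac; rewrite inE.
Qed.

Lemma doubly_stochastic_perturbation X : doubly_stochastic X -> ~~ is_perm_mx X ->
  exists E : 'M[R]_n, [/\ E != 0, doubly_stochastic (X + E), doubly_stochastic (X - E)
    & forall i j, E i j != 0 -> `|E i j| < X i j /\ X i j + `|E i j| <= 1].
Proof.
move=> X_ds X_nperm.
have [D [D_neq0 D_rows D_cols D_frac]] := doubly_stochastic_direction X_ds X_nperm.
pose gap (x : 'I_n * 'I_n) :=
  if D x.1 x.2 != 0 then Num.min (X x.1 x.2) (1 - X x.1 x.2) else 1.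
have gap_gt0 x : 0 < gap x.
  rewrite /gap; case: ifP => // /D_frac /andP[X_gt0 X_lt1].
  by rewrite lt_min X_gt0 subr_gt0.
have [t t_gt0 t_small] := exists_small_pos (fun x => `|D x.1 x.2|) gap_gt0.
have E_small i j : (t *: D) i j != 0 ->
    `|(t *: D) i j| < X i j /\ X i j + `|(t *: D) i j| <= 1.
  rewrite mxE mulf_eq0 negb_or => /andP[_ Dij_neq0].
  have := t_small (i, j); rewrite /gap /= Dij_neq0 lt_min normrM gtr0_norm //.
  by case/andP=> ? ?; split; lra.
have E_le i j : `|(t *: D) i j| <= X i j.
  have [->|/E_small[/ltW //]] := eqVneq ((t *: D) i j) 0.
  by have [X_ge0 _] := X_ds; rewrite normr0.
have E_rows i : \sum_j (t *: D) i j = 0.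
  by under eq_bigr do rewrite mxE; rewrite -mulr_sumr D_rows mulr0.
have E_cols j : \sum_i (t *: D) i j = 0.
  by under eq_bigr do rewrite mxE; rewrite -mulr_sumr D_cols mulr0.
have [XE_ds XE'_ds] := doubly_stochastic_addr_subr X_ds E_rows E_cols E_le.
by exists (t *: D); split; rewrite // scaler_eq0 negb_or gt_eqF.
Qed.

End DoublyStochastic.

Section PermutationMatrices.
Variables (R : realType) (n : nat).
Implicit Types (P Q B : 'M[R]_n).

Lemma sum_perm_mx_entries (g : R -> R) (s : 'S_n) :
  \sum_i \sum_j g ((perm_mx s : 'M[R]_n) i j) = \sum_i \sum_j g ((1%:M : 'M[R]_n) i j).
Proof.
under eq_bigr do under eq_bigr do rewrite perm_mxE.
rewrite [RHS](reindex_inj (@perm_inj _ s)) /=.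
by apply: eq_bigr => i _; apply: eq_bigr => j _; rewrite mxE.
Qed.

Lemma penalty_perm_mx (p eps : R) P Q : is_perm_mx P -> is_perm_mx Q ->
  penalty p eps P = penalty p eps Q.
Proof.
case/is_perm_mxP => s ->; case/is_perm_mxP => s' ->.
by rewrite /penalty !(sum_perm_mx_entries (fun x => (x + eps) `^ p)).
Qed.

Lemma doubly_stochastic_sum B : doubly_stochastic B -> \sum_(k : 'I_n * 'I_n) B k.1 k.2 = n%:R.
Proof.
move=> [_ [B_rows _]]; rewrite -pair_bigA /=.
by under eq_bigr do rewrite B_rows; rewrite sumr_const card_ord.
Qed.

Lemma perm_mx_dist_sub_le P Q B : is_perm_mx P -> is_perm_mx Q -> doubly_stochastic B ->
  frob_norm (P - B) ^+ 2 - frob_norm (Q - B) ^+ 2 <= 2 * n%:R.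
Proof.
move=> P_perm Q_perm B_ds; have [B_ge0 _] := B_ds.
have termwise (k : 'I_n * 'I_n) :
    (P - B) k.1 k.2 * (P - B) k.1 k.2 - (Q - B) k.1 k.2 * (Q - B) k.1 k.2
      <= P k.1 k.2 - Q k.1 k.2 + 2 * B k.1 k.2.
  rewrite !mxE; have := B_ge0 k.1 k.2.
  by case: (perm_mx01 k.1 k.2 P_perm) => ->; case: (perm_mx01 k.1 k.2 Q_perm) => ->; nra.
rewrite !frob_norm_sq !frob_innerE -sumrB (le_trans (ler_sum _ (fun k _ => termwise k))) //.
have [P_ds Q_ds] := (perm_mx_doubly_stochastic P_perm, perm_mx_doubly_stochastic Q_perm).
rewrite !big_split /= sumrN -mulr_sumr !doubly_stochastic_sum //; lra.
Qed.

End PermutationMatrices.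

Section Objective.
Variables (R : realType) (n : nat) (f : 'M[R]_n -> R) (p eps mu sigma : R) (Xbar : 'M[R]_n).

Definition objective (X : 'M[R]_n) : R :=
  f X + sigma * penalty p eps X - mu * frob_norm (X - Xbar) ^+ 2.

Lemma objective_minimizer_perm_mx (g : 'M[R]_n -> 'M[R]_n) (nu : R) (Xt : 'M[R]_n) :
  (forall X Y, doubly_stochastic X -> doubly_stochastic Y ->
     f Y - f X - frob_inner (g X) (Y - X) <= nu / 2 * frob_norm (Y - X) ^+ 2) ->
  0 < p < 1 -> 0 <= eps -> 0 <= sigma ->
  nu - 2 * mu < sigma * (p * (1 - p) * (1 + eps) `^ (p - 2)) ->
  doubly_stochastic Xt -> (forall X, doubly_stochastic X -> objective Xt <= objective X) ->
  is_perm_mx Xt.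
Proof.
move=> f_smooth p01 eps_ge0 sigma_ge0 sigma_big Xt_ds Xt_min; apply: contraT => Xt_nperm.
have [E [E_neq0 XE_ds XE'_ds E_small]] := doubly_stochastic_perturbation Xt_ds Xt_nperm.
have f_mid := smooth_midpoint_le f_smooth Xt_ds XE_ds XE'_ds.
have pen_mid := ler_wpM2l sigma_ge0 (penalty_midpoint p01 eps_ge0 E_small).
have dist_mid := congr1 (fun d => mu * d) (frob_norm_parallelogram (Xt - Xbar) E).
have gap : 0 < (sigma * (p * (1 - p) * (1 + eps) `^ (p - 2)) - (nu - 2 * mu))
    * frob_norm E ^+ 2 by rewrite mulr_gt0 ?subr_gt0 ?frob_norm_sq_gt0.
have := Xt_min _ XE_ds; have := Xt_min _ XE'_ds; rewrite /objective.
rewrite !(addrAC Xt _ (- Xbar)) => min_sub min_add; exfalso.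
lra.
Qed.

Lemma objective_perm_mx_le (P Q : 'M[R]_n) : is_perm_mx P -> is_perm_mx Q ->
  objective P <= objective Q ->
  f P - f Q <= mu * (frob_norm (P - Xbar) ^+ 2 - frob_norm (Q - Xbar) ^+ 2).
Proof.
move=> P_perm Q_perm; rewrite /objective (penalty_perm_mx p eps P_perm Q_perm) mulrBr.
lra.
Qed.

Lemma objective_min_perm_mx_f_min (c2 : R) (Xt : 'M[R]_n) :
  doubly_stochastic Xbar -> 0 < mu -> mu * (2 * n%:R) < c2 ->
  (forall X Y, is_perm_mx X -> is_perm_mx Y -> f X != f Y -> c2 <= `|f X - f Y|) ->
  is_perm_mx Xt -> (forall P, is_perm_mx P -> objective Xt <= objective P) ->
  forall P, is_perm_mx P -> f Xt <= f P.
Proof.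
move=> Xbar_ds mu_gt0 mu_small f_sep Xt_perm Xt_min P P_perm.
rewrite leNgt; apply/negP => fP_lt.
have := f_sep _ _ Xt_perm P_perm (negbT (gt_eqF fP_lt)); rewrite gtr0_norm ?subr_gt0 //.
have := ler_wpM2l (ltW mu_gt0) (perm_mx_dist_sub_le Xt_perm P_perm Xbar_ds).
have := objective_perm_mx_le Xt_perm P_perm (Xt_min P P_perm).
lra.
Qed.

Lemma objective_min_perm_mx_dist_max (Xt Xs : 'M[R]_n) : 0 < mu ->
  is_perm_mx Xt -> is_perm_mx Xs -> objective Xt <= objective Xs -> f Xs <= f Xt ->
  frob_norm (Xs - Xbar) <= frob_norm (Xt - Xbar).
Proof.
move=> mu_gt0 Xt_perm Xs_perm Xt_le fXs_le.
rewrite -(ler_pXn2r (isT : (0 < 2)%N)) ?nnegrE ?frob_norm_ge0 // -subr_ge0.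
rewrite -(pmulr_rge0 _ mu_gt0); apply: le_trans (objective_perm_mx_le Xt_perm Xs_perm Xt_le).
by rewrite subr_ge0.
Qed.

End Objective.

Theorem theorem5p2 (R : realType) (n : nat) (f : 'M[R]_n -> R)
  (nu_lo nu_hi c2 p eps : R) (K : nat) (hatX : 'I_K -> 'M[R]_n) (mu sigma : R)
  (Xt : 'M[R]_n) :
  (forall X : 'M[R]_n, differentiable f X) ->
  nu_lo <= nu_hi ->
  (forall X Y : 'M[R]_n, doubly_stochastic X -> doubly_stochastic Y ->
     nu_lo / 2 * frob_norm (Y - X) ^+ 2
       <= f Y - f X - frob_inner (grad f X) (Y - X)
     /\ f Y - f X - frob_inner (grad f X) (Y - X)
       <= nu_hi / 2 * frob_norm (Y - X) ^+ 2) ->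
  0 < c2 ->
  (forall X Y : 'M[R]_n, is_perm_mx X -> is_perm_mx Y -> f X != f Y ->
     c2 <= `|f X - f Y|) ->
  0 < p < 1 ->
  0 <= eps ->
  (1 <= K)%N ->
  (forall i, doubly_stochastic (hatX i)) ->
  let nu_h := p * (1 - p) * (1 + eps) `^ (p - 2) in
  let Xbar := (K%:R)^-1 *: \sum_(i < K) hatX i in
  let F := fun X : 'M[R]_n =>
     f X + sigma * (\sum_(i < n) \sum_(j < n) (X i j + eps) `^ p)
         - mu * frob_norm (X - Xbar) ^+ 2 in
  0 < mu < c2 / (2 * n%:R) ->
  sigma > Num.max ((nu_hi - 2 * mu) / nu_h) 0 ->
  doubly_stochastic Xt ->
  (forall X, doubly_stochastic X -> F Xt <= F X) ->
  (is_perm_mx Xt /\ (forall X : 'M[R]_n, is_perm_mx X -> f Xt <= f X)) /\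
  (forall Xs : 'M[R]_n, is_perm_mx Xs ->
     (forall X : 'M[R]_n, is_perm_mx X -> f Xs <= f X) ->
     frob_norm (Xs - Xbar) <= frob_norm (Xt - Xbar)).
Proof.
move=> _ _ f_curv c2_gt0 f_sep p01 eps_ge0 K_gt0 hatX_ds nu_h Xbar F.
move=> /andP[mu_gt0 mu_lt] sigma_big Xt_ds Xt_min.
have two_n_gt0 : 0 < 2 * n%:R :> R.
  rewrite pmulr_rgt0 // ltr0n lt0n; apply: contraTneq mu_lt => ->.
  by rewrite mulr0 invr0 mulr0 -leNgt ltW.
have nu_h_gt0 : 0 < nu_h by case/andP: p01 => ? ?; rewrite !mulr_gt0 ?powR_gt0 //; lra.
move: sigma_big; rewrite gt_max ltr_pdivrMr // => /andP[sigma_big sigma_gt0].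
have Xt_perm : is_perm_mx Xt.
  apply: (objective_minimizer_perm_mx (g := grad f) (nu := nu_hi)) p01 eps_ge0 (ltW sigma_gt0)
    sigma_big Xt_ds Xt_min => X Y X_ds Y_ds.
  exact: (f_curv X Y X_ds Y_ds).2.
have Xbar_ds : doubly_stochastic Xbar := doubly_stochastic_mean K_gt0 hatX_ds.
have Xt_min_perm P : is_perm_mx P -> F Xt <= F P.
  by move=> P_perm; apply: Xt_min; apply: perm_mx_doubly_stochastic.
rewrite ltr_pdivlMr // in mu_lt.
have Xt_opt := objective_min_perm_mx_f_min Xbar_ds mu_gt0 mu_lt f_sep Xt_perm Xt_min_perm.
split=> // Xs Xs_perm Xs_opt.
apply: objective_min_perm_mx_dist_max (Xt_min_perm _ Xs_perm) _ => //.
exact: Xs_opt.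
Qed.
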